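(* In the calculus $\lambda^{RE}$ described in the context, parallel reduction is a backward simulation: if $e_1\Rrightarrow e_2$ and $e_2\to e_2'$, then there exists $e_1'$ such that $e_1\to^*e_1'$ and $e_1'\Rrightarrow e_2'$.
   Context: Syntax of $\lambda^{RE}$. Basic types $b ::= \mathsf{Bool}\mid\mathsf{Unit}$. Constants $c ::= \mathsf{true}\mid\mathsf{false}\mid\mathsf{unit}\mid (=_b)\mid (=_{(c,b)})$. Expressions $e ::= c\mid x\mid e\ e\mid \lambda x{:}\tau.\,e\mid \mathsf{BEq}_b\ e\ e\ e\mid \mathsf{XEq}_{x:\tau\to\tau}\ e\ e\ e$. Values $v ::= c\mid \lambda x{:}\tau.\,e\mid \mathsf{BEq}_b\ e\ e\ v\mid \mathsf{XEq}_{x:\tau\to\tau}\ e\ e\ v$. Types $\tau ::= \{x{:}b\mid e\}\mid x{:}\tau\to\tau\mid \mathsf{PEq}_{\tau}\{e\}\{e\}$. $e[x:=e']$ is capture-avoiding substitution. Reduction: evaluation contexts $E ::= \bullet\mid E\ e\mid v\ E\mid \mathsf{BEq}_b\ e\ e\ E\mid\mathsf{XEq}_{x:\tau\to\tau}\ e\ e\ E$; $E[e]\to E[e']$ if $e\to e'$; $(\lambda x{:}\tau.\,e)\ v\to e[x:=v]$; $(=_b)\ c_1\to(=_{(c_1,b)})$; $(=_{(c_1,b)})\ c_2\to\mathsf{true}$ if $c_1,c_2$ syntactically equal, else $\to\mathsf{false}$. $\to^*$ is the reflexive–transitive closure. Parallel reduction $e\Rrightarrow e'$ and $\tau\Rrightarrow\tau'$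 is defined inductively: $x\Rrightarrow x$; $c\Rrightarrow c$; $\lambda x{:}\tau.e\Rrightarrow\lambda x{:}\tau'.e'$ if $\tau\Rrightarrow\tau'$, $e\Rrightarrow e'$; $e_1\ e_2\Rrightarrow e_1'\ e_2'$ if $e_i\Rrightarrow e_i'$; $(\lambda x{:}\tau.e)\ v\Rrightarrow e'[x:=v']$ if $e\Rrightarrow e'$ and $v\Rrightarrow v'$; $(=_b)\ c_1\Rrightarrow(=_{(c_1,b)})$; $(=_{(c_1,b)})\ c_2\Rrightarrow d$ where $d=\mathsf{true}$ if $c_1,c_2$ are syntactically equal and $\mathsf{false}$ otherwise; $\mathsf{BEq}_b\ e_l\ e_r\ e\Rrightarrow\mathsf{BEq}_b\ e_l'\ e_r'\ e'$ if $e_l\Rrightarrow e_l'$, $e_r\Rrightarrow e_r'$, $e\Rrightarrow e'$; $\mathsf{XEq}_{x:\tau_x\to\tau}\ e_l\ e_r\ e\Rrightarrow\mathsf{XEq}_{x:\tau_x'\to\tau'}\ e_l'\ e_r'\ e'$ if all five components parallel reduce; on types: $\{x{:}b\mid r\}\Rrightarrow\{x{:}b\mid r'\}$ if $r\Rrightarrow r'$; $x{:}\tau_x\to\tau\Rrightarrow x{:}\tau_x'\to\tau'$ if $\tau_x\Rrightarrow\tau_x'$, $\tau\Rrightarrow\tau'$; $\mathsf{PEq}_\tau\{e_l\}\{e_r\}\Rrightarrow\mathsf{PEq}_{\tau'}\{e_l'\}\{e_r'\}$ if all components parallel reduce. *)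

From Stdlib Require Import Arith Relations.

Inductive basety : Type := TBool | TUnit.

Inductive const : Type :=
| CTrue
| CFalse
| CUnit
| CEqB (b : basety)
| CEqC (c : const) (b : basety).

(* Binders: Lam binds var 0 in its body (not in the annotation);
   TRef b r binds var 0 in r; TArr tx t binds var 0 in t;
   XEq tx t el er e binds var 0 in t (the codomain of x:tx -> t). *)
Inductive expr : Type :=
| Const (c : const)
| Var (n : nat)
| App (e1 e2 : expr)
| Lam (t : ty) (e : expr)
| BEq (b : basety) (el er e : expr)
| XEq (tx t : ty) (el er e : expr)
with ty : Type :=
| TRef (b : basety) (r : expr)
| TArr (tx t : ty)
| TPEq (t : ty) (el er : expr).

Fixpoint shift_e (d k : nat) (e : expr) : expr :=
  match e with
  | Const c => Const c
  | Var n => if Nat.ltb n k then Var n else Var (n + d)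
  | App e1 e2 => App (shift_e d k e1) (shift_e d k e2)
  | Lam t e => Lam (shift_t d k t) (shift_e d (S k) e)
  | BEq b el er e => BEq b (shift_e d k el) (shift_e d k er) (shift_e d k e)
  | XEq tx t el er e =>
      XEq (shift_t d k tx) (shift_t d (S k) t)
          (shift_e d k el) (shift_e d k er) (shift_e d k e)
  end
with shift_t (d k : nat) (t : ty) : ty :=
  match t with
  | TRef b r => TRef b (shift_e d (S k) r)
  | TArr tx t => TArr (shift_t d k tx) (shift_t d (S k) t)
  | TPEq t el er => TPEq (shift_t d k t) (shift_e d k el) (shift_e d k er)
  end.

Fixpoint subst_e (j : nat) (s : expr) (e : expr) : expr :=
  match e with
  | Const c => Const c
  | Var n =>
      if Nat.ltb n j then Var n
      else if Nat.eqb n j then shift_e j 0 s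
      else Var (pred n)
  | App e1 e2 => App (subst_e j s e1) (subst_e j s e2)
  | Lam t e => Lam (subst_t j s t) (subst_e (S j) s e)
  | BEq b el er e => BEq b (subst_e j s el) (subst_e j s er) (subst_e j s e)
  | XEq tx t el er e =>
      XEq (subst_t j s tx) (subst_t (S j) s t)
          (subst_e j s el) (subst_e j s er) (subst_e j s e)
  end
with subst_t (j : nat) (s : expr) (t : ty) : ty :=
  match t with
  | TRef b r => TRef b (subst_e (S j) s r)
  | TArr tx t => TArr (subst_t j s tx) (subst_t (S j) s t)
  | TPEq t el er => TPEq (subst_t j s t) (subst_e j s el) (subst_e j s er)
  end.

Definition subst0 (e v : expr) : expr := subst_e 0 v e.

Inductive value : expr -> Prop :=
| V_Const c : value (Const c)
| V_Lam t e : value (Lam t e)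
| V_BEq b el er v : value v -> value (BEq b el er v)
| V_XEq tx t el er v : value v -> value (XEq tx t el er v).

Inductive step : expr -> expr -> Prop :=
| S_AppL e1 e1' e2 : step e1 e1' -> step (App e1 e2) (App e1' e2)
| S_AppR v e2 e2' : value v -> step e2 e2' -> step (App v e2) (App v e2')
| S_BEq b el er e e' : step e e' -> step (BEq b el er e) (BEq b el er e')
| S_XEq tx t el er e e' : step e e' -> step (XEq tx t el er e) (XEq tx t el er e')
| S_Beta t e v : value v -> step (App (Lam t e) v) (subst0 e v)
| S_EqB b c1 : step (App (Const (CEqB b)) (Const c1)) (Const (CEqC c1 b))
| S_EqTrue b c1 c2 : c1 = c2 ->
    step (App (Const (CEqC c1 b)) (Const c2)) (Const CTrue)
| S_EqFalse b c1 c2 : c1 <> c2 ->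
    step (App (Const (CEqC c1 b)) (Const c2)) (Const CFalse).

Definition steps : expr -> expr -> Prop := clos_refl_trans expr step.

Inductive par : expr -> expr -> Prop :=
| P_Var n : par (Var n) (Var n)
| P_Const c : par (Const c) (Const c)
| P_Lam t t' e e' : par_t t t' -> par e e' -> par (Lam t e) (Lam t' e')
| P_App e1 e1' e2 e2' : par e1 e1' -> par e2 e2' -> par (App e1 e2) (App e1' e2')
| P_Beta t e e' v v' : value v -> par e e' -> par v v' ->
    par (App (Lam t e) v) (subst0 e' v')
| P_EqB b c1 : par (App (Const (CEqB b)) (Const c1)) (Const (CEqC c1 b))
| P_EqTrue b c1 c2 : c1 = c2 ->
    par (App (Const (CEqC c1 b)) (Const c2)) (Const CTrue)
| P_EqFalse b c1 c2 : c1 <> c2 ->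
    par (App (Const (CEqC c1 b)) (Const c2)) (Const CFalse)
| P_BEq b el el' er er' e e' : par el el' -> par er er' -> par e e' ->
    par (BEq b el er e) (BEq b el' er' e')
| P_XEq tx tx' t t' el el' er er' e e' :
    par_t tx tx' -> par_t t t' -> par el el' -> par er er' -> par e e' ->
    par (XEq tx t el er e) (XEq tx' t' el' er' e')
with par_t : ty -> ty -> Prop :=
| PT_Ref b r r' : par r r' -> par_t (TRef b r) (TRef b r')
| PT_Arr tx tx' t t' : par_t tx tx' -> par_t t t' -> par_t (TArr tx t) (TArr tx' t')
| PT_PEq t t' el el' er er' : par_t t t' -> par el el' -> par er er' ->
    par_t (TPEq t el er) (TPEq t' el' er').

(* A small step of the target of e1 ⇛ e2 happens in evaluation position, and
   by induction on ⇛ a source whose target is a value evaluates to a value that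
   still parallel-reduces to it; so e1 can be evaluated until it exposes the
   redex fired in e2, and then fire it too.  The one case without a structural
   induction hypothesis is a contracted β-redex (λx.e) v ⇛ e'[v'] whose
   contractum steps: there (λx.e) v → e[v] ⇛ e'[v'], and we must continue from
   this new pair.  The relation [spar] records that derivation as a premise of
   its β-rule, which provides the missing induction hypothesis; by the
   substitution lemma it coincides with ⇛. *)

From Stdlib Require Import Arith Relations Lia.

Scheme expr_ind' := Induction for expr Sort Prop
  with ty_ind' := Induction for ty Sort Prop.
Combined Scheme expr_ty_ind from expr_ind', ty_ind'.

Ltac nat_cases := repeat (simpl; match goal with
 | |- context [Nat.ltb ?a ?b] => destruct (Nat.ltb_spec a b)
 | |- context [Nat.eqb ?a ?b] => destruct (Nat.eqb_spec a b)
 end); try (exfalso; lia); try (f_equal; lia).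

Ltac syntax_congr :=
  intros; simpl;
  lazymatch goal with
  | |- context [if _ then _ else _] => nat_cases
  | _ => f_equal;
         try match goal with IH : _ |- _ => solve [apply IH; lia | apply (IH (S _))] end
  end.

Lemma shift_shift :
  (forall e k c d d', k <= c -> c <= k + d' -> shift_e d c (shift_e d' k e) = shift_e (d + d') k e) /\
  (forall t k c d d', k <= c -> c <= k + d' -> shift_t d c (shift_t d' k t) = shift_t (d + d') k t).
Proof. apply expr_ty_ind; syntax_congr. Qed.

Lemma shift_shift_comm :
  (forall e k' c d k, shift_e d (k' + c + k) (shift_e c k' e) = shift_e c k' (shift_e d (k' + k) e)) /\
  (forall t k' c d k, shift_t d (k' + c + k) (shift_t c k' t) = shift_t c k' (shift_t d (k' + k) t)).
Proof. apply expr_ty_ind; syntax_congr. Qed.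

Lemma subst_shift_cancel :
  (forall e c j m s, c <= j -> j <= c + m -> subst_e j s (shift_e (S m) c e) = shift_e m c e) /\
  (forall t c j m s, c <= j -> j <= c + m -> subst_t j s (shift_t (S m) c t) = shift_t m c t).
Proof. apply expr_ty_ind; syntax_congr. Qed.

Lemma subst_shift_comm :
  (forall w c i j v, subst_e (c + i + j) v (shift_e i c w) = shift_e i c (subst_e (c + j) v w)) /\
  (forall t c i j v, subst_t (c + i + j) v (shift_t i c t) = shift_t i c (subst_t (c + j) v t)).
Proof.
  apply expr_ty_ind; syntax_congr. rewrite (proj1 shift_shift); try lia. f_equal; lia.
Qed.

Lemma subst_subst :
  (forall a i j v w, subst_e (i + j) v (subst_e i w a) = subst_e i (subst_e j v w) (subst_e (S (i + j)) v a)) /\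
  (forall a i j v w, subst_t (i + j) v (subst_t i w a) = subst_t i (subst_e j v w) (subst_t (S (i + j)) v a)).
Proof.
  apply expr_ty_ind; syntax_congr.
  - subst. apply (proj1 subst_shift_comm w 0 i j v).
  - replace n with (S (i + j)) by lia. rewrite (proj1 subst_shift_cancel); try lia. f_equal; lia.
Qed.

Lemma shift_subst :
  (forall a c k d w, shift_e d (c + k) (subst_e c w a) = subst_e c (shift_e d k w) (shift_e d (S (c + k)) a)) /\
  (forall a c k d w, shift_t d (c + k) (subst_t c w a) = subst_t c (shift_e d k w) (shift_t d (S (c + k)) a)).
Proof.
  apply expr_ty_ind; syntax_congr. subst. apply (proj1 shift_shift_comm w 0 c d k).
Qed.

Lemma shift_subst0 e v d k :
  shift_e d k (subst0 e v) = subst0 (shift_e d (S k) e) (shift_e d k v).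
Proof. apply (proj1 shift_subst e 0). Qed.

Lemma subst_subst0 e v w j :
  subst_e j w (subst0 e v) = subst0 (subst_e (S j) w e) (subst_e j w v).
Proof. apply (proj1 subst_subst e 0). Qed.

Lemma value_shift v d k : value v -> value (shift_e d k v).
Proof. induction 1; constructor; auto. Qed.

Lemma value_subst v j w : value v -> value (subst_e j w v).
Proof. induction 1; constructor; auto. Qed.

Inductive spar : expr -> expr -> Prop :=
| SP_Var n : spar (Var n) (Var n)
| SP_Const c : spar (Const c) (Const c)
| SP_Lam t t' e e' : spar_t t t' -> spar e e' -> spar (Lam t e) (Lam t' e')
| SP_App e1 e1' e2 e2' : spar e1 e1' -> spar e2 e2' -> spar (App e1 e2) (App e1' e2')
| SP_Beta t e e' v v' : value v -> spar e e' -> spar v v' ->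
    spar (subst0 e v) (subst0 e' v') ->
    spar (App (Lam t e) v) (subst0 e' v')
| SP_EqB b c1 : spar (App (Const (CEqB b)) (Const c1)) (Const (CEqC c1 b))
| SP_EqTrue b c1 c2 : c1 = c2 ->
    spar (App (Const (CEqC c1 b)) (Const c2)) (Const CTrue)
| SP_EqFalse b c1 c2 : c1 <> c2 ->
    spar (App (Const (CEqC c1 b)) (Const c2)) (Const CFalse)
| SP_BEq b el el' er er' e e' : spar el el' -> spar er er' -> spar e e' ->
    spar (BEq b el er e) (BEq b el' er' e')
| SP_XEq tx tx' t t' el el' er er' e e' :
    spar_t tx tx' -> spar_t t t' -> spar el el' -> spar er er' -> spar e e' ->
    spar (XEq tx t el er e) (XEq tx' t' el' er' e')
with spar_t : ty -> ty -> Prop :=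
| SPT_Ref b r r' : spar r r' -> spar_t (TRef b r) (TRef b r')
| SPT_Arr tx tx' t t' : spar_t tx tx' -> spar_t t t' -> spar_t (TArr tx t) (TArr tx' t')
| SPT_PEq t t' el el' er er' : spar_t t t' -> spar el el' -> spar er er' ->
    spar_t (TPEq t el er) (TPEq t' el' er').

Scheme spar_ind' := Induction for spar Sort Prop
  with spar_t_ind' := Induction for spar_t Sort Prop.
Combined Scheme spar_spar_t_ind from spar_ind', spar_t_ind'.
Scheme par_ind' := Induction for par Sort Prop
  with par_t_ind' := Induction for par_t Sort Prop.
Combined Scheme par_par_t_ind from par_ind', par_t_ind'.

Lemma spar_shift :
  (forall e e', spar e e' -> forall d k, spar (shift_e d k e) (shift_e d k e')) /\
  (forall t t', spar_t t t' -> forall d k, spar_t (shift_t d k t) (shift_t d k t')).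
Proof.
  apply spar_spar_t_ind; intros; simpl; try solve [constructor; auto].
  - destruct (Nat.ltb n k); constructor.
  - rewrite shift_subst0. constructor; auto using value_shift.
    rewrite <- !shift_subst0. auto.
Qed.

Lemma spar_subst :
  (forall e e', spar e e' -> forall w w' j, spar w w' -> spar (subst_e j w e) (subst_e j w' e')) /\
  (forall t t', spar_t t t' -> forall w w' j, spar w w' -> spar_t (subst_t j w t) (subst_t j w' t')).
Proof.
  apply spar_spar_t_ind; intros; simpl; try solve [constructor; auto].
  - destruct (Nat.ltb n j); [constructor |].
    destruct (Nat.eqb n j); [apply (proj1 spar_shift); auto | constructor].
  - rewrite subst_subst0. constructor; auto using value_subst.
    rewrite <- !subst_subst0. auto.
Qed.

Lemma par_spar :
  (forall e e', par e e' -> spar e e') /\ (forall t t', par_t t t' -> spar_t t t').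
Proof.
  apply par_par_t_ind; intros; try solve [constructor; auto].
  constructor; auto. apply (proj1 spar_subst); auto.
Qed.

Lemma spar_par :
  (forall e e', spar e e' -> par e e') /\ (forall t t', spar_t t t' -> par_t t t').
Proof. apply spar_spar_t_ind; intros; constructor; auto. Qed.

Lemma steps_map (f : expr -> expr) :
  (forall x y, step x y -> step (f x) (f y)) -> forall x y, steps x y -> steps (f x) (f y).
Proof.
  intros Hf; induction 1; [apply rt_step; auto | apply rt_refl | eapply rt_trans; eauto].
Qed.

Lemma steps_app_l a a' b : steps a a' -> steps (App a b) (App a' b).
Proof. apply (steps_map (fun x => App x b)); auto using S_AppL. Qed.

Lemma steps_app_r a b b' : value a -> steps b b' -> steps (App a b) (App a b').
Proof. intros Ha. apply (steps_map (App a)); auto using S_AppR. Qed.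

Lemma steps_app a a' b b' : steps a a' -> value a' -> steps b b' -> steps (App a b) (App a' b').
Proof.
  intros Ha Hv Hb. eapply rt_trans; [apply steps_app_l | apply steps_app_r]; eauto.
Qed.

Lemma steps_beq b el er e e' : steps e e' -> steps (BEq b el er e) (BEq b el er e').
Proof. apply (steps_map (BEq b el er)); auto using S_BEq. Qed.

Lemma steps_xeq tx t el er e e' : steps e e' -> steps (XEq tx t el er e) (XEq tx t el er e').
Proof. apply (steps_map (XEq tx t el er)); auto using S_XEq. Qed.

Lemma spar_value_steps e v : spar e v -> value v ->
  exists v1, value v1 /\ steps e v1 /\ spar v1 v.
Proof.
  induction 1; intros Hv; try solve [inversion Hv].
  - exists (Const c); repeat split; [constructor | apply rt_refl | constructor].
  - exists (Lam t e); repeat split; [constructor | apply rt_refl | constructor; auto].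
  - destruct (IHspar3 Hv) as (v1 & Hv1 & Hsteps & Hpar).
    exists v1; repeat split; auto.
    eapply rt_trans; [apply rt_step; constructor; auto | exact Hsteps].
  - exists (Const (CEqC c1 b)); repeat split; [constructor | apply rt_step; constructor | constructor].
  - exists (Const CTrue); repeat split; [constructor | apply rt_step; constructor; auto | constructor].
  - exists (Const CFalse); repeat split; [constructor | apply rt_step; constructor; auto | constructor].
  - inversion Hv; subst. destruct IHspar3 as (v1 & Hv1 & Hsteps & Hpar); auto.
    exists (BEq b el er v1); repeat split; [constructor | apply steps_beq | constructor]; auto.
  - inversion Hv; subst. destruct IHspar3 as (v1 & Hv1 & Hsteps & Hpar); auto.
    exists (XEq tx t el er v1); repeat split; [constructor | apply steps_xeq | constructor]; auto.
Qed.

Lemma spar_const_steps e c : spar e (Const c) -> steps e (Const c).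
Proof.
  intros H. destruct (spar_value_steps _ _ H (V_Const c)) as (v1 & Hv1 & Hsteps & Hpar).
  inversion Hpar; subst; auto; inversion Hv1.
Qed.

Lemma spar_lam_steps e t b' : spar e (Lam t b') ->
  exists t0 b, steps e (Lam t0 b) /\ spar b b'.
Proof.
  intros H. destruct (spar_value_steps _ _ H (V_Lam t b')) as (v1 & Hv1 & Hsteps & Hpar).
  inversion Hpar; subst; eauto; inversion Hv1.
Qed.

Lemma steps_app_const_step a b c1 c2 r : spar a (Const c1) -> spar b (Const c2) ->
  step (App (Const c1) (Const c2)) r -> steps (App a b) r.
Proof.
  intros Ha Hb Hr. eapply rt_trans; [apply steps_app | apply rt_step; exact Hr].
  all: auto using spar_const_steps, V_Const.
Qed.

Lemma spar_backward_sim e1 e2 : spar e1 e2 -> forall e2', step e2 e2' ->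
  exists e1', steps e1 e1' /\ spar e1' e2'.
Proof.
  induction 1 as [| | | a a' b b' Ha IHa Hb IHb | t e e' v v' Hv _ _ _ _ _ IHsubst
                  | | | | b el el' er er' e e' Hl _ Hr _ He IHe
                  | tx tx' t t' el el' er er' e e' Htx Ht Hl _ Hr _ He IHe];
    intros e2'' Hs; try solve [inversion Hs].
  - inversion Hs; subst;
      try solve [eexists; split; [eapply steps_app_const_step; eassumption | constructor]].
    + edestruct IHa as (a1 & Hsteps & Hpar); [eassumption |].
      exists (App a1 b); split; [apply steps_app_l | constructor]; auto.
    + destruct (spar_value_steps _ _ Ha ltac:(assumption)) as (a1 & Ha1 & Hsteps & Hpar).
      edestruct IHb as (b1 & Hsteps' & Hpar'); [eassumption |].
      exists (App a1 b1); split; [apply steps_app | constructor]; auto.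
    + destruct (spar_lam_steps _ _ _ Ha) as (t0 & e0 & Hsteps & Hpar).
      destruct (spar_value_steps _ _ Hb ltac:(assumption)) as (b1 & Hb1 & Hsteps' & Hpar').
      exists (subst0 e0 b1); split.
      * eapply rt_trans; [apply steps_app; eauto using V_Lam | apply rt_step; constructor; auto].
      * apply (proj1 spar_subst); auto.
  - destruct (IHsubst _ Hs) as (e1' & Hsteps & Hpar).
    exists e1'; split; auto.
    eapply rt_trans; [apply rt_step; constructor; auto | exact Hsteps].
  - inversion Hs; subst. edestruct IHe as (e1 & Hsteps & Hpar); [eassumption |].
    exists (BEq b el er e1); split; [apply steps_beq | constructor]; auto.
  - inversion Hs; subst. edestruct IHe as (e1 & Hsteps & Hpar); [eassumption |].
    exists (XEq tx t el er e1); split; [apply steps_xeq | constructor]; auto.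
Qed.

Theorem corollaryC15 : forall e1 e2 e2' : expr,
  par e1 e2 -> step e2 e2' ->
  exists e1', steps e1 e1' /\ par e1' e2'.
Proof.
  intros e1 e2 e2' Hpar Hstep.
  destruct (spar_backward_sim _ _ (proj1 par_spar _ _ Hpar) _ Hstep) as (e1' & Hsteps & Hpar').
  exists e1'; split; [exact Hsteps | exact (proj1 spar_par _ _ Hpar')].
Qed.
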